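(* For every marked poset $(P,A,\lambda)$, the marked order polytope $\mathcal{O}_{P,A}(\lambda)$ and the marked chain polytope $\mathcal{C}_{P,A}(\lambda)$ are both normal (lattice) polytopes.
   Context: A marked poset is a triple $(P,A,\lambda)$ where $(P,\prec)$ is a finite poset, $A\subseteq P$ contains all minimal and all maximal elements of $P$, and $\lambda:A\to\mathbb{Z}_{\ge 0}$, $a\mapsto\lambda_a$. The marked order polytope $\mathcal{O}_{P,A}(\lambda)\subset\mathbb{R}^{P\setminus A}$ is the set of $(x_p)_{p\in P\setminus A}$ with $x_p\le x_q$ for $p\prec q$ in $P\setminus A$, $x_p\le\lambda_a$ for $p\prec a$, $a\in A$, and $\lambda_b\le x_q$ for $b\prec q$, $b\in A$. The marked chain polytope $\mathcal{C}_{P,A}(\lambda)\subset\mathbb{R}^{P\setminus A}$ is the set of $(x_p)_{p\in P\setminus A}$ with $x_p\ge0$ for all $p$, and $x_{p_1}+\cdots+x_{p_n}\le\lambda_a-\lambda_b$ for every chain $b\prec p_n\prec\cdots\prec p_1\prec a$ with $n\ge1$, $a,b\in A$, $p_i\in P\setminus A$. A lattice polytope $Q\subset\mathbb{R}^d$ is normal if for every $n\in\mathbb{N}$ the set $nQ\cap\mathbb{Z}^d$ is the $n$-fold Minkowski sum of $Q\cap\mathbb{Z}^d$. *)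

From HB Require Import structures.
From mathcomp Require Import all_boot all_order all_algebra.
Set Implicit Arguments. Unset Strict Implicit. Unset Printing Implicit Defensive.
Import Order.TTheory GRing.Theory Num.Theory.
Local Open Scope ring_scope.

Section Marked.
Variable R : realFieldType.
Context {disp : Order.disp_t} {P : finPOrderType disp}.

Definition marked_set (A : {set P}) : Prop :=
  forall p : P,
    ((forall q : P, ~~ (q < p)%O) \/ (forall q : P, ~~ (p < q)%O)) -> p \in A.

Definition free_elts (A : {set P}) : finType := {p : P | p \notin A}.

Definition marked_order_polytope (A : {set P}) (lam : P -> nat)
    (x : free_elts A -> R) : Prop :=
  (forall p q : free_elts A, (val p < val q)%O -> x p <= x q) /\
  (forall (p : free_elts A) (a : P), a \in A -> (val p < a)%O -> x p <= (lam a)%:R) /\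
  (forall (p : free_elts A) (b : P), b \in A -> (b < val p)%O -> (lam b)%:R <= x p).

(* Marked chain polytope C_{P,A}(lam) in R^{P \ A}.  A chain
   b < p_n < ... < p_1 < a (n >= 1, p_i not in A) is encoded by the
   nonempty sequence s = [:: p_n; ...; p_1]. *)
Definition marked_chain_polytope (A : {set P}) (lam : P -> nat)
    (x : free_elts A -> R) : Prop :=
  (forall p : free_elts A, 0 <= x p) /\
  (forall (a b : P) (s : seq (free_elts A)),
      a \in A -> b \in A -> s != [::] ->
      path (fun u v : P => (u < v)%O) b (rcons (map val s) a) ->
      \sum_(p <- s) x p <= (lam a)%:R - (lam b)%:R).
End Marked.

Section Polytopes.
Variable R : realFieldType.
Variable D : finType.

Definition lattice_polytope (Q : (D -> R) -> Prop) : Prop :=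
  exists vs : seq (D -> int),
    forall x : D -> R,
      Q x <-> exists c : 'I_(size vs) -> R,
        (forall k, 0 <= c k) /\ \sum_k c k = 1 /\
        forall i, x i = \sum_k c k * ((nth (fun _ => 0) vs k i)%:~R).

Definition normal_polytope (Q : (D -> R) -> Prop) : Prop :=
  forall n : nat, (0 < n)%N ->
    forall z : D -> int,
      (exists q : D -> R, Q q /\ forall i, (z i)%:~R = n%:R * q i) <->
      (exists zs : 'I_n -> D -> int,
          (forall k, Q (fun i => (zs k i)%:~R)) /\
          forall i, z i = \sum_(k < n) zs k i).
End Polytopes.

Arguments marked_order_polytope R {disp P} A lam x.
Arguments marked_chain_polytope R {disp P} A lam x.

From HB Require Import structures.
From mathcomp Require Import all_boot all_order all_algebra.
From mathcomp Require Import ring zify.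
From Stdlib Require Import FunctionalExtensionality ClassicalEpsilon.
Import Order.TTheory GRing.Theory Num.Theory.

(* Points are extended from P \ A to P by the marking.  A point X of the order
   polytope is a convex combination of lattice points comonotone with it: the
   elements sharing a non-integral value of X can be moved together to the
   nearest value below or above, and X lies between the two results.  The
   transfer map X |-> (X p - max_(q < p) X q) sends the order polytope onto the
   chain polytope (its inverse sums along chains); it is linear on comonotone
   points and preserves integrality, so the chain polytope inherits these
   decompositions.  For normality, a lattice point W of the n-th dilate is the
   sum over k < n of the lattice points floor((W + k) / n) (Hermite's identity),
   which are comonotone with W. *)

Lemma sum_ord_divnD n m : (0 < n)%N -> (\sum_(k < n) (m + k) %/ n)%N = m.
Proof.
move=> n0; elim: m => [|m IH].
  by rewrite big1 // => k _; rewrite add0n divn_small.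
have shift f : (f 0 + \sum_(k < n) f k.+1 = \sum_(k < n) f k + f n)%N.
  by rewrite -(big_ord_recl n (fun k : 'I_n.+1 => f k)) big_ord_recr.
have := shift (fun k => (m + k) %/ n); rewrite addn0 IH.
have -> : ((m + n) %/ n = m %/ n + 1)%N by rewrite -{1}[n]mul1n divnDMl.
under eq_bigr do rewrite -addSnnS.
by move=> h; apply/eqP; rewrite -(eqn_add2l (m %/ n)) h; lia.
Qed.

Lemma size_undup_lt (T : eqType) (s1 s2 : seq T) x :
  {subset s1 <= s2} -> x \in s2 -> x \notin s1 ->
  (size (undup s1) < size (undup s2))%N.
Proof.
move=> sub12 xs2 xs1; rewrite ltnNge; apply/negP => le21.
have sub : {subset undup s1 <= undup s2} by move=> y; rewrite !mem_undup; apply: sub12.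
have [_ eq12] := uniq_min_size (undup_uniq s1) sub le21.
by move: xs1; rewrite -mem_undup eq12 mem_undup xs2.
Qed.

Lemma nearest_above d (T : orderType d) (s : seq T) (c : T) :
  has (fun w => c < w)%O s ->
  exists2 v, v \in s & (c < v)%O /\ forall w, w \in s -> (c < w)%O -> (v <= w)%O.
Proof.
elim: s => [//|x s IH] /=.
have [/IH [v vs [cv vmin]] _|none /orP[cx|//]] := boolP (has _ s).
- have [cxv|] := boolP ((c < x) && (x < v))%O.
  + case/andP: cxv => cx xv; exists x; rewrite ?inE ?eqxx //; split => // w.
    by rewrite inE => /orP[/eqP-> //|ws cw]; exact: ltW (lt_le_trans xv (vmin w ws cw)).
  + move=> nxv; exists v; rewrite ?inE ?vs ?orbT //; split => // w.
    rewrite inE => /orP[/eqP-> cx|]; last exact: vmin.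
    by move: nxv; rewrite cx /= -leNgt.
- exists x; rewrite ?inE ?eqxx //; split => // w.
  rewrite inE => /orP[/eqP-> //|ws cw].
  by case/negP: none; apply/hasP; exists w.
Qed.

Lemma nearest_below d (T : orderType d) (s : seq T) (c : T) :
  has (fun w => w < c)%O s ->
  exists2 v, v \in s & (v < c)%O /\ forall w, w \in s -> (w < c)%O -> (w <= v)%O.
Proof. exact: (@nearest_above _ T^d). Qed.

Local Open Scope ring_scope.

(** * Convex hulls of lattice points *)

Section LatticeHull.
Context {R : realFieldType}.

Definition in_hull {I : finType} (L : (I -> nat) -> Prop) (v : I -> R) : Prop :=
  exists m (c : 'I_m -> R) (ws : 'I_m -> I -> nat),
    [/\ forall k, 0 <= c k, \sum_k c k = 1, forall k, L (ws k) &
        forall i, v i = \sum_k c k * (ws k i)%:R].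

Definition convex {I : finType} (Q : (I -> R) -> Prop) : Prop :=
  forall m (c : 'I_m -> R) (xs : 'I_m -> I -> R),
    (forall k, 0 <= c k) -> \sum_k c k = 1 -> (forall k, Q (xs k)) ->
    Q (fun i => \sum_k c k * xs k i).

Context {I : finType}.
Implicit Types (L : (I -> nat) -> Prop) (Q : (I -> R) -> Prop).

Lemma in_hull_pt L w v : L w -> (forall i, v i = (w i)%:R) -> in_hull L v.
Proof.
move=> Lw vw; exists 1%N, (fun _ => 1), (fun _ => w); split => //.
  by rewrite big_ord1.
by move=> i; rewrite big_ord1 mul1r.
Qed.

Lemma in_hull_sub L1 L2 v :
  (forall w, L1 w -> L2 w) -> in_hull L1 v -> in_hull L2 v.
Proof.
by move=> L12 [m [c [ws [c0 c1 Lws vE]]]]; exists m, c, ws; split => // k; apply: L12.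
Qed.

Lemma in_hull_comp (J : finType) (f : J -> I) L (L' : (J -> nat) -> Prop) v :
  (forall w, L w -> L' (fun j => w (f j))) -> in_hull L v ->
  in_hull L' (fun j => v (f j)).
Proof.
move=> LL' [m [c [ws [c0 c1 Lws vE]]]].
by exists m, c, (fun k j => ws k (f j)); split => // k; apply: LL'.
Qed.

Lemma in_hull_comb L t v1 v2 v : 0 <= t <= 1 ->
  in_hull L v1 -> in_hull L v2 -> (forall i, v i = t * v1 i + (1 - t) * v2 i) ->
  in_hull L v.
Proof.
move=> /andP[t0 t1] [m1 [c1 [ws1 [c10 c11 L1 v1E]]]].
move=> [m2 [c2 [ws2 [c20 c21 L2 v2E]]]] vE.
pose c k := match split k with inl j => t * c1 j | inr j => (1 - t) * c2 j end.
pose ws k := match split k with inl j => ws1 j | inr j => ws2 j end.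
have sumE (F : 'I_(m1 + m2) -> R) : \sum_k F k =
    \sum_(j < m1) F (lshift m2 j) + \sum_(j < m2) F (rshift m1 j) by rewrite big_split_ord.
have cl j : c (lshift m2 j) = t * c1 j by rewrite /c (unsplitK (inl _ j)).
have cr j : c (rshift m1 j) = (1 - t) * c2 j by rewrite /c (unsplitK (inr _ j)).
have wl j : ws (lshift m2 j) = ws1 j by rewrite /ws (unsplitK (inl _ j)).
have wr j : ws (rshift m1 j) = ws2 j by rewrite /ws (unsplitK (inr _ j)).
exists (m1 + m2)%N, c, ws; split.
- by move=> k; rewrite /c; case: (split k) => j; apply: mulr_ge0; rewrite ?subr_ge0.
- rewrite sumE; under eq_bigr do rewrite cl; under [X in _ + X]eq_bigr do rewrite cr.
  by rewrite -!mulr_sumr c11 c21 !mulr1 addrC subrK.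
- by move=> k; rewrite /ws; case: (split k).
- move=> i; rewrite vE v1E v2E sumE !mulr_sumr.
  by congr (_ + _); apply: eq_bigr => j _; rewrite ?(cl, cr, wl, wr) mulrA.
Qed.

Lemma in_hull_seq (vs : seq (I -> int)) L v :
  (forall w, L w ->
     exists j : 'I_(size vs), forall i, nth (fun _ => 0) vs j i = (w i)%:Z) ->
  in_hull L v ->
  exists c : 'I_(size vs) -> R, (forall j, 0 <= c j) /\ \sum_j c j = 1 /\
    forall i, v i = \sum_j c j * (nth (fun _ => 0) vs j i)%:~R.
Proof.
move=> Lvs [m [c [ws [c0 c1 Lws vE]]]].
have [idx idxE] := fin_all_exists (fun k => Lvs _ (Lws k)).
exists (fun j => \sum_(k | idx k == j) c k); split; [|split].
- by move=> j; apply: sumr_ge0.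
- by rewrite -c1 (partition_big idx predT).
- move=> i; rewrite vE (partition_big idx predT) //=.
  apply: eq_bigr => j _; rewrite mulr_suml; apply: eq_bigr => k /eqP <-.
  by rewrite idxE.
Qed.

Lemma lattice_polytope_of_hull Q (b : nat) : convex Q ->
  (forall w, Q (fun i => (w i)%:R) -> forall i, (w i <= b)%N) ->
  (forall x, Q x -> in_hull (fun w => Q (fun i => (w i)%:R)) x) ->
  lattice_polytope Q.
Proof.
move=> convQ Qbound Qhull.
pose G := {ffun I -> 'I_b.+1}.
pose Qb (g : G) : bool :=
  if excluded_middle_informative (Q (fun i => (g i)%:R)) then true else false.
have QbP (g : G) : reflect (Q (fun i => (g i)%:R)) (Qb g).
  by rewrite /Qb; case: excluded_middle_informative => h; constructor.
pose pts := [seq g <- enum G | Qb g].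
pose toZ (g : G) : I -> int := fun i => (g i : nat)%:Z.
pose vs := map toZ pts.
pose g0 : G := [ffun=> ord0].
have nth_vs (j : 'I_(size vs)) : (nth g0 pts j \in pts) /\
    forall i, nth (fun _ => 0) vs j i = (nth g0 pts j i : nat)%:Z.
  have jlt : (j < size pts)%N by rewrite -(size_map toZ).
  by split; [exact: mem_nth | move=> i; rewrite (nth_map g0)].
exists vs => x; split => [/Qhull|[c [c0 [c1 xE]]]].
- apply: in_hull_seq => w Qw.
  pose g : G := [ffun i => inord (w i)].
  have gw i : (g i : nat) = w i by rewrite ffunE inordK // ltnS Qbound.
  have gpts : g \in pts.
    rewrite mem_filter mem_enum andbT; apply/QbP.
    have -> : (fun i => (g i)%:R) = (fun i => (w i)%:R :> R).
      by apply: functional_extensionality => i; rewrite gw.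
    exact: Qw.
  have jlt : (index g pts < size vs)%N by rewrite size_map index_mem.
  exists (Ordinal jlt) => i; have [_ ->] := nth_vs (Ordinal jlt).
  by rewrite /= nth_index // gw.
- have -> : x = (fun i => \sum_j c j * (nth (fun _ => 0) vs j i)%:~R).
    by apply: functional_extensionality.
  apply: convQ => // j; have [/[!mem_filter] /andP[/QbP Qg _] nthE] := nth_vs j.
  have -> : (fun i => (nth (fun _ => 0) vs j i)%:~R) = (fun i => (nth g0 pts j i)%:R :> R).
    by apply: functional_extensionality => i; rewrite nthE.
  exact: Qg.
Qed.

Lemma normal_polytope_of Q : convex Q ->
  (forall n, (0 < n)%N -> forall (z : I -> int) q, Q q ->
     (forall i, (z i)%:~R = n%:R * q i) ->
     exists ws : 'I_n -> I -> nat,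
       (forall k, Q (fun i => (ws k i)%:R)) /\ forall i, z i = (\sum_(k < n) ws k i)%:Z) ->
  normal_polytope Q.
Proof.
move=> convQ split_dilate n n0 z; split => [[q [Qq zq]]|[zs [Qzs zE]]].
  have [ws [Qws zE]] := split_dilate n n0 z q Qq zq.
  exists (fun k i => (ws k i)%:Z); split => [k|i].
    by have -> : (fun i => ((ws k i)%:Z)%:~R) = (fun i => (ws k i)%:R :> R)
      by apply: functional_extensionality => i; rewrite -pmulrn.
  by rewrite zE -(big_morph _ PoszD (erefl (0 : int))).
have nz : n%:R != 0 :> R by rewrite pnatr_eq0 -lt0n.
exists (fun i => \sum_k n%:R^-1 * (zs k i)%:~R); split.
- apply: convQ => //; first by move=> k; rewrite invr_ge0 ler0n.
  by rewrite sumr_const card_ord -[_ *+ n]mulr_natr mulVf.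
- by move=> i; rewrite zE rmorph_sum -mulr_sumr mulrA mulfV // mul1r.
Qed.

End LatticeHull.

Lemma exists_rel_minimal {T : finType} {r : rel T} :
  transitive r -> irreflexive r ->
  forall p q, r q p -> exists2 b, r b p & forall c, ~~ r c b.
Proof.
move=> rT rI p q qp.
have [b bp bmin] := @arg_minnP T q (fun b => r b p) (fun b => #|[pred d | r d b]|) qp.
exists b => // c; apply/negP => cb.
have := bmin c (rT _ _ _ cb bp); apply/negP; rewrite -ltnNge.
apply: proper_card; apply/properP; split.
- by apply/subsetP => d; rewrite !inE => dc; exact: rT dc cb.
- by exists c; rewrite !inE ?cb ?rI.
Qed.

(** * Marked posets and the transfer map *)

Section MarkedPoset.
Variable R : realFieldType.
Variable disp : Order.disp_t.
Variable P : finPOrderType disp.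
Variable A : {set P}.
Implicit Types (mu nu : P -> nat) (X Y : P -> R).

Local Notation D := (free_elts A).
Local Notation lt := (fun u v : P => (u < v)%O).

Definition extend mu (x : D -> R) : P -> R :=
  fun p => if insub p is Some u then x u else (mu p)%:R.

Lemma extend_val mu x (u : D) : extend mu x (val u) = x u.
Proof. by rewrite /extend valK. Qed.

Lemma extend_marked mu x a : a \in A -> extend mu x a = (mu a)%:R.
Proof. by move=> aA; rewrite /extend insubN // negbK. Qed.

Lemma extend_free mu x p (pA : p \notin A) : extend mu x p = x (Sub p pA).
Proof. by rewrite -(extend_val mu). Qed.

(* Pairs of marked elements are not compared: lam need not be order preserving. *)
Definition ext_order mu X : Prop :=
  (forall a, a \in A -> X a = (mu a)%:R) /\
  (forall p q, (p < q)%O -> (p \notin A) || (q \notin A) -> X p <= X q).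

Definition ext_chain mu Y : Prop :=
  (forall p, p \notin A -> 0 <= Y p) /\
  (forall a b (s : seq P), a \in A -> b \in A -> s != [::] ->
     all (fun p => p \notin A) s -> path lt b (rcons s a) ->
     \sum_(p <- s) Y p <= (mu a)%:R - (mu b)%:R).

Lemma order_ext {mu x} :
  marked_order_polytope R A mu x -> ext_order mu (extend mu x).
Proof.
move=> [xpq [xpa xbp]]; split => [a aA|p q pq]; first by rewrite extend_marked.
case: (boolP (p \in A)) => pA; case: (boolP (q \in A)) => qA //= _.
- by rewrite (extend_marked _ _ _ pA) (extend_free _ _ _ qA); apply: xbp.
- by rewrite (extend_marked _ _ _ qA) (extend_free _ _ _ pA); apply: xpa.
- by rewrite (extend_free _ _ _ pA) (extend_free _ _ _ qA); apply: xpq.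
Qed.

Lemma order_restrict {mu X} :
  ext_order mu X -> marked_order_polytope R A mu (fun i => X (val i)).
Proof.
move=> [XA Xle]; split; [|split].
- by move=> p q pq; apply: Xle; rewrite ?(valP p).
- by move=> p a aA pa; rewrite -XA //; apply: Xle; rewrite ?(valP p).
- by move=> p b bA bp; rewrite -XA //; apply: Xle; rewrite ?(valP p) ?orbT.
Qed.

Lemma chain_ext {mu y} :
  marked_chain_polytope R A mu y -> ext_chain mu (extend mu y).
Proof.
move=> [y0 ysum]; split => [p pA|a b s aA bA s0 sA].
  by rewrite (extend_free _ _ _ pA).
have [s' sE] : exists s' : seq D, s = map val s'.
  elim: s sA {s0} => [|p s IH] /=; first by exists [::].
  by case/andP=> pA /IH[s' ->]; exists (Sub p pA :: s').
subst s; rewrite big_map; under eq_bigr do rewrite extend_val.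
by move=> pth; apply: ysum => //; case: (s') s0.
Qed.

Lemma chain_restrict {mu Y} :
  ext_chain mu Y -> marked_chain_polytope R A mu (fun i => Y (val i)).
Proof.
move=> [Y0 Ysum]; split => [p|a b s aA bA s0 pth]; first exact/Y0/(valP p).
rewrite -(big_map val xpredT Y); apply: Ysum => //.
- by case: (s) s0.
- by apply/allP => p /mapP[u _ ->]; apply: (valP u).
Qed.

Lemma scale_order mu n x : marked_order_polytope R A mu x ->
  marked_order_polytope R A (fun p => n * mu p)%N (fun i => n%:R * x i).
Proof.
move=> [xpq [xpa xbp]]; split; [|split] => [p q pq|p a aA pa|p b bA bp].
all: rewrite ?natrM; apply: ler_wpM2l => //; by [apply: xpq|apply: xpa|apply: xbp].
Qed.

Lemma scale_chain mu n y : marked_chain_polytope R A mu y ->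
  marked_chain_polytope R A (fun p => n * mu p)%N (fun i => n%:R * y i).
Proof.
move=> [y0 ysum]; split => [p|a b s aA bA s0 pth]; first exact: mulr_ge0.
by rewrite -mulr_sumr !natrM -mulrBr; apply: ler_wpM2l => //; apply: ysum.
Qed.

Lemma convex_order mu : convex (marked_order_polytope R A mu).
Proof.
move=> m c xs c0 c1 xsO.
have cst (v : R) : v = \sum_k c k * v by rewrite -mulr_suml c1 mul1r.
split; [|split] => [p q pq|p a aA pa|p b bA bp]; [|rewrite [_%:R]cst|rewrite [_%:R]cst].
all: apply: ler_sum => k _; apply: ler_wpM2l => //; have [? [? ?]] := xsO k; auto.
Qed.

Lemma convex_chain mu : convex (marked_chain_polytope R A mu).
Proof.
move=> m c xs c0 c1 xsC; split => [p|a b s aA bA s0 pth].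
  by apply: sumr_ge0 => k _; apply: mulr_ge0 => //; case: (xsC k).
have -> : (mu a)%:R - (mu b)%:R = \sum_k c k * ((mu a)%:R - (mu b)%:R) :> R.
  by rewrite -mulr_suml c1 mul1r.
rewrite exchange_big /=.
apply: ler_sum => k _; rewrite -mulr_sumr; apply: ler_wpM2l => //.
by case: (xsC k) => _; apply.
Qed.

Hypothesis marked : marked_set A.

Lemma exists_below {p : P} : p \notin A -> exists2 b, b \in A & (b < p)%O.
Proof.
case: (pickP (fun q => (q < p)%O)) => [q qp pA|none].
- have [b bp bmin] := exists_rel_minimal lt_trans ltxx _ _ qp.
  by exists b => //; apply: marked; left.
- by rewrite marked //; left => q; rewrite none.
Qed.

Lemma exists_above {p : P} : p \notin A -> exists2 a, a \in A & (p < a)%O.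
Proof.
have gt_trans : transitive (fun u v : P => (v < u)%O).
  by move=> v u w uv vw; apply: lt_trans vw uv.
case: (pickP (fun q => (p < q)%O)) => [q pq pA|none].
- have [a pa amax] := exists_rel_minimal gt_trans ltxx _ _ pq.
  by exists a => //; apply: marked; right.
- by rewrite marked //; right => q; rewrite none.
Qed.

Lemma ext_order_ge0 {mu X} : ext_order mu X -> forall p, 0 <= X p.
Proof.
move=> [XA Xle] p; case: (boolP (p \in A)) => [pA|pA]; first by rewrite XA.
have [b bA bp] := exists_below pA.
by apply: le_trans (Xle b p bp _); rewrite ?XA ?pA ?orbT.
Qed.

Definition max_mark mu : nat := \max_(p : P) mu p.

Lemma ext_order_le_max {mu X} : ext_order mu X -> forall p, X p <= (max_mark mu)%:R.
Proof.
move=> [XA Xle] p; case: (boolP (p \in A)) => [pA|pA].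
  by rewrite XA // ler_nat leq_bigmax.
have [a aA pa] := exists_above pA.
by apply: le_trans (Xle p a pa _) _; rewrite ?pA // XA // ler_nat leq_bigmax.
Qed.

Definition comonotone X Y : Prop := forall q r, X q <= X r -> Y q <= Y r.

Lemma comonotone_refl X : comonotone X X.
Proof. by []. Qed.

Lemma comonotone_trans X Y Z : comonotone X Y -> comonotone Y Z -> comonotone X Z.
Proof. by move=> XY YZ q r /XY /YZ. Qed.

Lemma ext_order_comonotone {mu nu X Y} : ext_order mu X -> comonotone X Y ->
  (forall a, a \in A -> Y a = (nu a)%:R) -> ext_order nu Y.
Proof. by move=> [_ Xle] XY YA; split => // p q pq /(Xle p q pq) /XY. Qed.

Definition max_below X p : R := \big[Num.max/0]_(q | (q < p)%O) X q.

Lemma le_max_below X p q : (q < p)%O -> X q <= max_below X p.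
Proof. by move=> qp; apply: le_bigmax_cond. Qed.

Lemma max_below_ge0 X p : 0 <= max_below X p.
Proof. exact: bigmax_ge_id. Qed.

Lemma max_below_attained X p : p \notin A ->
  exists2 q, (q < p)%O & forall Y, comonotone X Y -> (forall r, 0 <= Y r) ->
    max_below Y p = Y q.
Proof.
move=> pA; have [b _ bp] := exists_below pA.
have [q qp qmax] := @arg_maxP _ R P b (fun q => (q < p)%O) X bp.
exists q => // Y XY Y0; apply/eqP; rewrite eq_le le_max_below // andbT.
by apply/bigmax_leP; split => // r rp; apply/XY/qmax.
Qed.

Definition transfer X p : R := X p - max_below X p.

Lemma sum_transfer_path X c s :
  path lt c s -> \sum_(p <- s) transfer X p <= X (last c s) - X c.
Proof.
elim: s c => [|u s IH] c /=; first by rewrite big_nil subrr.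
case/andP=> cu /IH pth; rewrite big_cons.
have cu' : transfer X u <= X u - X c by rewrite lerD2l lerN2 le_max_below.
by apply: le_trans (lerD cu' pth) _; rewrite addrC addrA subrK.
Qed.

Lemma transfer_chain mu X : ext_order mu X -> ext_chain mu (transfer X).
Proof.
move=> XO; have X0 := ext_order_ge0 XO; case: XO => [XA Xle]; split.
  move=> p pA; rewrite subr_ge0; apply/bigmax_leP; split => [|q qp]; first exact: X0.
  by apply: Xle; rewrite ?pA ?orbT.
move=> a b [//|u s] aA bA _ /andP[uA sA]; rewrite rcons_path => /andP[pth la].
apply: le_trans (sum_transfer_path X _ _ pth) _.
rewrite -(XA a aA) -(XA b bA) lerD2r; apply: Xle => //.
rewrite /=; have := mem_last u s; rewrite inE => /orP[/eqP->|ls] //.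
  by rewrite uA.
by rewrite (allP sA).
Qed.

Lemma transfer_sum {n} {c : 'I_n -> R} {X} {Ws : 'I_n -> P -> R} {p} : p \notin A ->
  (forall k, comonotone X (Ws k)) -> (forall k q, 0 <= Ws k q) ->
  (forall q, 0 <= X q) -> (forall q, X q = \sum_k c k * Ws k q) ->
  transfer X p = \sum_k c k * transfer (Ws k) p.
Proof.
move=> pA XWs Ws0 X0 XE; have [q qp maxE] := max_below_attained X p pA.
rewrite /transfer maxE // ?comonotone_refl //.
under [RHS]eq_bigr do rewrite maxE // mulrBr.
by rewrite sumrB !XE.
Qed.

Lemma transfer_nat mu (W : P -> nat) p : ext_order mu (fun q => (W q)%:R) ->
  p \notin A -> exists m : nat, transfer (fun q => (W q)%:R) p = m%:R.
Proof.
move=> WO pA; have W0 := ext_order_ge0 WO; case: WO => [_ Wle].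
have [q qp maxE] := max_below_attained (fun q => (W q)%:R) p pA.
rewrite /transfer maxE // ?comonotone_refl //.
have : (W q)%:R <= (W p)%:R :> R by apply: Wle; rewrite ?pA ?orbT.
by rewrite ler_nat => Wqp; exists (W p - W q)%N; rewrite natrB.
Qed.

Definition below p : {set P} := [set q | (q < p)%O].

Lemma card_below_lt {p q : P} : (q < p)%O -> (#|below q| < #|below p|)%N.
Proof.
move=> qp; apply: proper_card; apply/properP; split.
- by apply/subsetP => r; rewrite !inE => /lt_trans; apply.
- by exists q; rewrite !inE ?ltxx.
Qed.

Lemma card_below_lt_card p : (#|below p| < #|P|)%N.
Proof.
rewrite -cardsT; apply: proper_card; apply/properP; split; first exact: subsetT.
by exists p; rewrite ?inE ?ltxx.
Qed.

(* Inverse of the transfer map; the fuel k suffices once k > #|below p|. *)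
Fixpoint cumulate_rec mu Y k p : R :=
  if k is k'.+1 then
    if p \in A then (mu p)%:R else Y p + max_below (cumulate_rec mu Y k') p
  else 0.

Definition cumulate mu Y p : R := cumulate_rec mu Y #|P| p.

Lemma cumulate_rec_stable mu Y k m p :
  (#|below p| < k)%N -> (k <= m)%N -> cumulate_rec mu Y m p = cumulate_rec mu Y k p.
Proof.
elim: k m p => [//|k IH] [//|m] p pk km /=.
case: (p \in A) => //; congr (_ + _); apply: eq_bigr => q qp.
by apply: IH => //; apply: leq_trans (card_below_lt qp) _; rewrite -ltnS.
Qed.

Lemma cumulate_A mu Y a : a \in A -> cumulate mu Y a = (mu a)%:R.
Proof.
move=> aA; rewrite /cumulate; have := card_below_lt_card a.
by case: #|P| => [//|n] _ /=; rewrite aA.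
Qed.

Lemma cumulate_free mu Y p : p \notin A ->
  cumulate mu Y p = Y p + max_below (cumulate mu Y) p.
Proof.
move=> pA; rewrite {1}/cumulate; have := card_below_lt_card p.
case E: #|P| => [//|n] _ /=; rewrite (negbTE pA); congr (_ + _).
apply: eq_bigr => q qp; rewrite /cumulate E; symmetry; apply: cumulate_rec_stable => //.
by rewrite -ltnS -E; apply: leq_ltn_trans (card_below_lt qp) (card_below_lt_card p).
Qed.

Lemma transfer_cumulate mu Y p : p \notin A -> transfer (cumulate mu Y) p = Y p.
Proof. by move=> pA; rewrite /transfer cumulate_free // addrK. Qed.

Lemma cumulate_ge0 mu Y : (forall p, p \notin A -> 0 <= Y p) ->
  forall p, 0 <= cumulate mu Y p.
Proof.
move=> Y0; rewrite /cumulate; elim: #|P| => [//|k IH] p /=.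
by case: (boolP (p \in A)) => // pA; rewrite addr_ge0 ?Y0 ?max_below_ge0.
Qed.

Lemma cumulate_nat mu Y : (forall p, p \notin A -> exists m : nat, Y p = m%:R) ->
  forall p, exists m : nat, cumulate mu Y p = m%:R.
Proof.
move=> Ynat; rewrite /cumulate; elim: #|P| => [|k IH] p /=; first by exists 0%N.
case: (boolP (p \in A)) => pA; first by eexists.
have [m1 ->] := Ynat p pA.
have [m2 ->] : exists m : nat, max_below (cumulate_rec mu Y k) p = m%:R.
  apply: (big_ind (fun v => exists m : nat, v = m%:R)); first by exists 0%N.
    by move=> _ _ [m ->] [m' ->]; exists (maxn m m'); rewrite natr_max.
  by move=> q _; apply: IH.
by exists (m1 + m2)%N; rewrite natrD.
Qed.

Lemma cumulate_chain mu Y p : (forall q, q \notin A -> 0 <= Y q) -> p \notin A ->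
  exists b (s : seq P), [/\ b \in A, all (fun q => q \notin A) s,
    path lt b (rcons s p) & cumulate mu Y p = (mu b)%:R + \sum_(q <- rcons s p) Y q].
Proof.
move=> Y0; have [n] := ubnP #|below p|; elim: n p => [//|n IH] p pn pA.
have [q qp maxE] := max_below_attained (cumulate mu Y) p pA.
rewrite cumulate_free // maxE ?comonotone_refl //; last exact: cumulate_ge0.
case: (boolP (q \in A)) => qA.
  exists q, [::]; split => //=; first by rewrite qp.
  by rewrite cumulate_A // big_seq1 addrC.
have qn : (#|below q| < n)%N by apply: leq_trans (card_below_lt qp) _; rewrite -ltnS.
have [b [s [bA sA pth ->]]] := IH q qn qA.
exists b, (rcons s q); split => //; first by rewrite all_rcons qA.
  by rewrite rcons_path pth last_rcons.
by rewrite [X in _ = _ + X]big_rcons /=; ring.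
Qed.

Lemma cumulate_order mu Y : ext_chain mu Y -> ext_order mu (cumulate mu Y).
Proof.
move=> [Y0 Ysum]; split => [|p q pq]; first exact: cumulate_A.
case: (boolP (q \in A)) => qA /=; rewrite ?orbF => pA.
  have [b [s [bA sA pth ->]]] := cumulate_chain mu Y p Y0 pA.
  rewrite cumulate_A // -lerBrDl; apply: Ysum => //.
  - by case: (s).
  - by rewrite all_rcons pA.
  - by rewrite rcons_path pth last_rcons.
by rewrite (cumulate_free _ _ _ qA) -[cumulate _ _ p]add0r lerD ?Y0 ?le_max_below.
Qed.

(** * Lattice points *)

Definition ints mu : seq R := [seq k%:R | k <- iota 0 (max_mark mu).+1].
Definition values X : seq R := [seq X p | p <- enum P].
Definition nonint mu X : seq R := [seq v <- values X | v \notin ints mu].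

Definition snap X c v : P -> R := fun q => if X q == c then v else X q.

Lemma nonint_nil {mu X} :
  nonint mu X = [::] -> exists W : P -> nat, forall p, X p = (W p)%:R.
Proof.
move=> E; suff /fin_all_exists : forall p, exists k : nat, X p = k%:R by [].
move=> p; have : X p \notin nonint mu X by rewrite E.
rewrite mem_filter negb_and negbK map_f ?mem_enum ?orbF //.
by case/mapP => k _ ->; exists k.
Qed.

Lemma snap_comonotone X c v :
  (forall r, c < X r -> v <= X r) -> (forall r, X r < c -> X r <= v) ->
  comonotone X (snap X c v).
Proof.
move=> above below q r; rewrite /snap.
case: eqP => [->|/eqP qc]; case: eqP => [->|/eqP rc] //.
- by move=> cr; apply: above; rewrite lt_def rc.
- by move=> qc'; apply: below; rewrite lt_def eq_sym qc.
Qed.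

Lemma snap_ext_order {mu X c v} : ext_order mu X -> c \in nonint mu X ->
  comonotone X (snap X c v) -> ext_order mu (snap X c v).
Proof.
move=> XO; have [XA _] := XO; rewrite mem_filter => /andP[cI _] XXv.
apply: (ext_order_comonotone XO XXv) => a aA; rewrite /snap XA //.
case: eqP => // ac; move: cI; rewrite -ac map_f // mem_iota /= add0n ltnS.
exact: leq_bigmax.
Qed.

Lemma snap_nonint_lt {mu X c v} : c \in nonint mu X -> v != c ->
  v \in values X ++ ints mu ->
  (size (undup (nonint mu (snap X c v))) < size (undup (nonint mu X)))%N.
Proof.
move=> cX vc vX; apply: size_undup_lt cX _.
  move=> w; rewrite mem_filter => /andP[+ /mapP[q _ wE]]; rewrite wE /snap.
  case: eqP => _ vI; rewrite mem_filter vI; last by rewrite map_f ?mem_enum.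
  by move: vX; rewrite mem_cat (negPf vI) orbF.
rewrite mem_filter negb_and; apply/orP; right.
apply/mapP => -[q _]; rewrite /snap.
by case: eqP => [_|/eqP qc] /eqP; rewrite eq_sym ?(negPf vc) ?(negPf qc).
Qed.

Lemma snap_neighbours {mu X c} : ext_order mu X -> c \in nonint mu X ->
  exists cm cp, [/\ cm < c < cp, cm \in values X ++ ints mu, cp \in values X ++ ints mu,
    comonotone X (snap X c cm) & comonotone X (snap X c cp)].
Proof.
move=> XO; rewrite mem_filter => /andP[cI /mapP[p0 _ cE]].
have int_ref k : (k <= max_mark mu)%N -> k%:R \in values X ++ ints mu.
  by move=> kM; rewrite mem_cat map_f ?orbT // mem_iota.
have X_ref r : X r \in values X ++ ints mu by rewrite mem_cat map_f ?mem_enum.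
have int_neq k : (k <= max_mark mu)%N -> c != k%:R.
  by move=> kM; apply: contraNneq cI => ->; rewrite map_f // mem_iota.
have c0 : 0 < c.
  have := int_neq 0%N isT; rewrite mulr0n lt_def eq_sym => ->.
  by rewrite cE (ext_order_ge0 XO).
have cM : c < (max_mark mu)%:R.
  by rewrite lt_def eq_sym int_neq // cE (ext_order_le_max XO).
have [cm cmr [cmc cmmax]] : exists2 cm, cm \in values X ++ ints mu &
    cm < c /\ forall w, w \in values X ++ ints mu -> w < c -> w <= cm.
  by apply: nearest_below; apply/hasP; exists 0; rewrite -[0](mulr0n 1) ?int_ref.
have [cp cpr [ccp cpmin]] : exists2 cp, cp \in values X ++ ints mu &
    c < cp /\ forall w, w \in values X ++ ints mu -> c < w -> cp <= w.
  by apply: nearest_above; apply/hasP; exists (max_mark mu)%:R; rewrite ?int_ref.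
exists cm, cp; split; rewrite ?cmc ?ccp //; apply: snap_comonotone => r.
- by move=> cr; apply/ltW/(lt_trans cmc).
- exact/cmmax/X_ref.
- exact/cpmin/X_ref.
- by move=> rc; apply/ltW/(lt_trans rc).
Qed.

Lemma ext_order_in_hull mu X : ext_order mu X ->
  in_hull (fun W => ext_order mu (fun p => (W p)%:R) /\
                    comonotone X (fun p => (W p)%:R)) X.
Proof.
have [n] := ubnP (size (undup (nonint mu X))).
elim: n X => // n IH X Xn XO.
case E: (nonint mu X) => [|c cs].
  have [W XW] := nonint_nil E.
  have XWE : X = (fun p => (W p)%:R) by apply: functional_extensionality.
  by apply: (in_hull_pt _ W) => //; rewrite -XWE; split => //; apply: comonotone_refl.
have cX : c \in nonint mu X by rewrite E mem_head.
have [cm [cp [/andP[cmc ccp] cmX cpX co_m co_p]]] := snap_neighbours XO cX.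
have hull v : v \in values X ++ ints mu -> v != c -> comonotone X (snap X c v) ->
    in_hull (fun W => ext_order mu (fun p => (W p)%:R) /\
                      comonotone X (fun p => (W p)%:R)) (snap X c v).
  move=> vX vc coX; apply: in_hull_sub (IH _ _ (snap_ext_order XO cX coX)).
    by move=> W [WO coW]; split => //; apply: comonotone_trans coW.
  by apply: leq_trans (snap_nonint_lt cX vc vX) _; rewrite -ltnS.
have cpm : 0 < cp - cm by rewrite subr_gt0 (lt_trans cmc).
apply: (in_hull_comb _ ((c - cm) / (cp - cm)) _ _ _ _
  (hull _ cpX (negbT (gt_eqF ccp)) co_p) (hull _ cmX (negbT (lt_eqF cmc)) co_m)).
  apply/andP; split; first by apply: divr_ge0; apply: ltW; rewrite // subr_gt0.
  by rewrite ler_pdivrMr // mul1r lerD2r (ltW ccp).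
move=> p; rewrite /snap; case: eqP => [->|_]; last by ring.
by field; rewrite gt_eqF.
Qed.

Lemma transfer_lattice_pt {mu} {W : P -> nat} : ext_order mu (fun p => (W p)%:R) ->
  exists w : D -> nat, marked_chain_polytope R A mu (fun i => (w i)%:R) /\
    forall i, transfer (fun p => (W p)%:R) (val i) = (w i)%:R.
Proof.
move=> WO; have /fin_all_exists [w wE] : forall i : D,
    exists m : nat, transfer (fun p => (W p)%:R) (val i) = m%:R.
  by move=> i; apply: transfer_nat WO (valP i).
exists w; split => //.
have -> : (fun i => (w i)%:R) = (fun i => transfer (fun p => (W p)%:R) (val i)).
  by apply: functional_extensionality => i; rewrite wE.
exact/chain_restrict/transfer_chain.
Qed.

Lemma transfer_in_hull mu X :
  in_hull (fun W => ext_order mu (fun p => (W p)%:R) /\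
                    comonotone X (fun p => (W p)%:R)) X ->
  in_hull (fun w => marked_chain_polytope R A mu (fun i => (w i)%:R))
          (fun i => transfer X (val i)).
Proof.
move=> [m [c [ws [c0 c1 Lws XE]]]].
have /fin_all_exists [zs zsE] := fun k => transfer_lattice_pt (Lws k).1.
exists m, c, zs; split => // [k|i]; first by case: (zsE k).
rewrite (transfer_sum (valP i) _ _ _ XE).
- by apply: eq_bigr => k _; case: (zsE k) => _ ->.
- by move=> k; case: (Lws k).
- by move=> k; apply: ext_order_ge0 (Lws k).1.
- by move=> q; rewrite XE; apply: sumr_ge0 => k _; rewrite mulr_ge0.
Qed.

Lemma lattice_order mu : lattice_polytope (marked_order_polytope R A mu).
Proof.
apply: (lattice_polytope_of_hull _ (max_mark mu) (convex_order mu)).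
  move=> w /order_ext/ext_order_le_max le_max i.
  by have := le_max (val i); rewrite extend_val ler_nat.
move=> x /order_ext /ext_order_in_hull hullX.
have -> : x = (fun i => extend mu x (val i)).
  by apply: functional_extensionality => i; rewrite extend_val.
by apply: in_hull_comp hullX => W [/order_restrict WO _].
Qed.

Lemma lattice_chain mu : lattice_polytope (marked_chain_polytope R A mu).
Proof.
apply: (lattice_polytope_of_hull _ (max_mark mu) (convex_chain mu)).
  move=> w [_ wsum] i; have [b bA bp] := exists_below (valP i).
  have [a aA pa] := exists_above (valP i).
  have := wsum a b [:: i] aA bA isT; rewrite /= bp pa big_seq1 => /(_ isT) wi.
  rewrite -(ler_nat R); apply: le_trans wi _.
  by rewrite lerBlDr -natrD ler_nat (leq_trans (leq_bigmax a)) ?leq_addr.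
move=> y /chain_ext YC.
have -> : y = (fun i => transfer (cumulate mu (extend mu y)) (val i)).
  apply: functional_extensionality => i.
  by rewrite transfer_cumulate ?extend_val ?(valP i).
exact/transfer_in_hull/ext_order_in_hull/cumulate_order.
Qed.

(** * Normality *)

Lemma extend_nat nu (z : D -> int) : (forall i, 0 <= (z i)%:~R :> R) ->
  exists W : P -> nat, forall p, extend nu (fun i => (z i)%:~R) p = (W p)%:R.
Proof.
move=> z0; suff /fin_all_exists : forall p, exists m : nat,
    extend nu (fun i => (z i)%:~R) p = m%:R by [].
move=> p; case: (boolP (p \in A)) => pA.
  by rewrite extend_marked //; eexists.
rewrite (extend_free _ _ _ pA); have := z0 (Sub p pA); rewrite ler0z.
by case: (z _) => // m _; exists m.
Qed.

Lemma ext_order_divn {mu n} (k : 'I_n) {W : P -> nat} :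
  ext_order (fun p => n * mu p)%N (fun p => (W p)%:R) ->
  ext_order mu (fun p => ((W p + k) %/ n)%:R) /\
  comonotone (fun p => (W p)%:R) (fun p => ((W p + k) %/ n)%:R).
Proof.
move=> WO; have [WA _] := WO.
have co : comonotone (fun p => (W p)%:R) (fun p => ((W p + k) %/ n)%:R).
  by move=> q r; rewrite !ler_nat => Wqr; rewrite leq_div2r ?leq_add2r.
split => //; apply: (ext_order_comonotone WO co) => a aA.
have /eqP := WA a aA; rewrite eqr_nat => /eqP ->.
by rewrite mulnC divnMDl ?(leq_ltn_trans _ (ltn_ord k)) // divn_small ?addn0.
Qed.

Lemma normal_order mu : normal_polytope (marked_order_polytope R A mu).
Proof.
apply: (normal_polytope_of _ (convex_order mu)) => n n0 z q Oq zq.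
pose nmu p := (n * mu p)%N.
have zO : marked_order_polytope R A nmu (fun i => (z i)%:~R).
  have -> : (fun i => (z i)%:~R) = (fun i => n%:R * q i).
    exact: functional_extensionality.
  exact: scale_order.
have XO := order_ext zO.
have [W XW] : exists W : P -> nat,
    forall p, extend nmu (fun i => (z i)%:~R) p = (W p)%:R.
  by apply: extend_nat => i; have := ext_order_ge0 XO (val i); rewrite extend_val.
have WO : ext_order nmu (fun p => (W p)%:R).
  by rewrite -(functional_extensionality _ _ XW).
exists (fun k i => (W (val i) + k) %/ n)%N; split => [k|i].
  exact: (order_restrict (ext_order_divn k WO).1).
have := XW (val i); rewrite extend_val sum_ord_divnD // => /eqP.
by rewrite [X in _ == X]pmulrn eqr_int => /eqP.
Qed.

Lemma normal_chain mu : normal_polytope (marked_chain_polytope R A mu).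
Proof.
apply: (normal_polytope_of _ (convex_chain mu)) => n n0 z q Cq zq.
pose nmu p := (n * mu p)%N.
have zC : marked_chain_polytope R A nmu (fun i => (z i)%:~R).
  have -> : (fun i => (z i)%:~R) = (fun i => n%:R * q i).
    exact: functional_extensionality.
  exact: scale_chain.
have [V YV] := extend_nat nmu z zC.1.
have YC := chain_ext zC; set Y := extend nmu _ in YC YV.
have /fin_all_exists [W XW] : forall p, exists m : nat, cumulate nmu Y p = m%:R.
  by apply: cumulate_nat => p _; exists (V p).
have WO : ext_order nmu (fun p => (W p)%:R).
  by rewrite -(functional_extensionality _ _ XW); apply: cumulate_order.
have /fin_all_exists [ws wsE] :=
  fun k : 'I_n => transfer_lattice_pt (ext_order_divn k WO).1.
exists ws; split => [k|i]; first by case: (wsE k).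
apply/eqP; rewrite -(eqr_int R) -pmulrn natr_sum.
rewrite -(extend_val nmu (fun i => (z i)%:~R) i) -/Y.
rewrite -(transfer_cumulate nmu) ?(valP i) // (functional_extensionality _ _ XW).
rewrite (transfer_sum (c := fun _ : 'I_n => 1)
  (Ws := fun k p => ((W p + k) %/ n)%:R) (valP i)).
- by apply/eqP/eq_bigr => k _; case: (wsE k) => _ ->; rewrite mul1r.
- by move=> k; case: (ext_order_divn k WO).
- by move=> k; apply: ext_order_ge0 (ext_order_divn k WO).1.
- exact: ext_order_ge0 WO.
- by move=> p; under eq_bigr do rewrite mul1r; rewrite -natr_sum sum_ord_divnD.
Qed.

End MarkedPoset.

Theorem corollary2p3 (R : realFieldType) (disp : Order.disp_t)
    (P : finPOrderType disp) (A : {set P}) (lam : P -> nat) :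
  marked_set A ->
  (lattice_polytope (marked_order_polytope R A lam) /\
   normal_polytope (marked_order_polytope R A lam)) /\
  (lattice_polytope (marked_chain_polytope R A lam) /\
   normal_polytope (marked_chain_polytope R A lam)).
Proof.
move=> marked; split; split.
- exact: lattice_order.
- exact: normal_order.
- exact: lattice_chain.
- exact: normal_chain.
Qed.
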